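(* In a combinatorial auction as described in the context, let $(x^*,p)$ be a Walrasian equilibrium which is not a price-match equilibrium, and let $\bar\imath$ be a bidder witnessing this, i.e. there is no feasible allocation $x^{-\bar\imath}$ with $x^{-\bar\imath}_k=0$ for all $k\in\mathcal K_{\bar\imath}$, $p\,a^k\le b_k$ for all $k$ with $x^{-\bar\imath}_k=1$, and $p\bm A x^{-\bar\imath}=p\bm Ax^*$. Then for some small $\epsilon>0$, the payment vector $\bar\rho$ defined by $\bar\rho_i=p\,a^{i*}$ for $i\ne\bar\imath$ and $\bar\rho_{\bar\imath}=p\,a^{\bar\imath*}-\epsilon$ is core-selecting at $x^*$. In particular, there is a core point with strictly lower total payments than the WE payments.
   Context: Combinatorial auction (CA): item types $j\in\mathcal J=\{1,\dots,J\}$ with supply $c_j\in\mathbb Z_{\ge1}$ (supply vector $c$); bidders $\mathcal I=\{1,\dots,I\}$; a finite set of bids $\mathcal K$, each bid $k$ made by a bidder $i(k)$ and consisting of a bundle $a^k\in\mathbb Z^J_{\ge0}$, $a^k\le c$, and an amount $b_k\ge0$; $\mathcal K_i$ is the set of bids of bidder $i$; bids are taken to be truthful. $\bm A$ is the $J\times K$ matrix with columns $a^k$, $\bm B$ the $I\times K$ matrix with $\bm B_{i,k}=1$ iff $k\in\mathcal K_i$. A feasible allocation is $x\in\{0,1\}^K$ with $\bm Ax\le c$, $\bm Bx\le\bm 1$. For a set of bidders $\mathcal C$ and supply $c'$, $w(\mathcal C,c',\cdot)$ is the maximum total bid amount over feasible allocations (supply $c'$) using only bids of bidders in $\mathcal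 C$. $x^*$ is an efficient (optimal) allocation; $a^{i*}$, $b_{i*}$ are the bundle and amount of bidder $i$'s accepted bid ($\bm 0$, $0$ if none). A payment vector $\rho$ ($\rho_i=0$ for bidders with no accepted bid) is core-selecting at $x^*$ if $\rho_i\le b_{i*}$ for all $i$ and for all $\mathcal C\subseteq\mathcal I$: $\sum_{i\in\mathcal C}(b_{i*}-\rho_i)+\sum_{i\in\mathcal I}\rho_i\ge w(\mathcal C,c,\mathcal K^{\mathcal C})$, $\mathcal K^{\mathcal C}$ the bids of bidders in $\mathcal C$. A Walrasian equilibrium (WE) is $(x^*,p)$ with $x^*$ efficient, $p\in\mathbb R^J_{\ge0}$, surpluses $s_i=b_{i*}-p\,a^{i*}\ge0$, $p\,a^k+s_{i(k)}\ge b_k$ for every bid $k$, and $p_j=0$ whenever $(\bm Ax^* )_j<c_j$; payments are $p\,a^{i*}$. A WE $(x^*,p)$ is a price-match equilibrium (PME) if for every bidder $i$ there is a feasible allocation $x^{-i}$ with $x^{-i}_k=0$ for all $k\in\mathcal K_i$, $p\,a^k\le b_k$ for every $k$ with $x^{-i}_k=1$, and $p\bm Ax^{-i}=p\bm Ax^*$. (Items may include artificial items, i.e. valid cuts added as rows of $\bm A$; they are treated like any other item.) *)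

From HB Require Import structures.
From mathcomp Require Import all_boot all_order all_algebra.
Set Implicit Arguments. Unset Strict Implicit. Unset Printing Implicit Defensive.
Import Order.TTheory GRing.Theory Num.Theory.
Local Open Scope ring_scope.

Section Auction.
Variable R : realFieldType.
Variables (J I K : nat).
Variable c : 'I_J -> nat.
Variable owner : 'I_K -> 'I_I.
Variable a : 'I_K -> 'I_J -> nat.
Variable b : 'I_K -> R.

(* An allocation is the set of accepted bids {k | x_k = 1}. *)
Definition feasible_with (c' : 'I_J -> nat) (x : {set 'I_K}) : bool :=
  [forall j, (\sum_(k in x) a k j <= c' j)%N] &&
  [forall i, (#|[set k in x | owner k == i]| <= 1)%N].

Definition feasible (x : {set 'I_K}) : bool := feasible_with c x.

Definition value (x : {set 'I_K}) : R := \sum_(k in x) b k.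

Definition w (C : {set 'I_I}) (c' : 'I_J -> nat) : R :=
  \big[Num.max/0]_(x : {set 'I_K} | feasible_with c' x &&
                     [forall k in x, owner k \in C]) value x.

Definition efficient (xs : {set 'I_K}) : Prop :=
  feasible xs /\ forall x, feasible x -> value x <= value xs.

Definition has_accepted (xs : {set 'I_K}) (i : 'I_I) : bool :=
  [exists k in xs, owner k == i].

Definition acc_bundle (xs : {set 'I_K}) (i : 'I_I) (j : 'I_J) : nat :=
  \sum_(k in xs | owner k == i) a k j.
Definition acc_amount (xs : {set 'I_K}) (i : 'I_I) : R :=
  \sum_(k in xs | owner k == i) b k.

Definition price (p : 'I_J -> R) (bun : 'I_J -> nat) : R :=
  \sum_j p j * (bun j)%:R.

Definition usage (x : {set 'I_K}) (j : 'I_J) : nat := \sum_(k in x) a k j.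

Definition core_selecting (xs : {set 'I_K}) (rho : 'I_I -> R) : Prop :=
  (forall i, ~~ has_accepted xs i -> rho i = 0) /\
  (forall i, rho i <= acc_amount xs i) /\
  (forall C : {set 'I_I},
      \sum_(i in C) (acc_amount xs i - rho i) + \sum_i rho i >= w C c).

Definition surplus (xs : {set 'I_K}) (p : 'I_J -> R) (i : 'I_I) : R :=
  acc_amount xs i - price p (acc_bundle xs i).

Definition walrasian (xs : {set 'I_K}) (p : 'I_J -> R) : Prop :=
  efficient xs /\
  (forall j, 0 <= p j) /\
  (forall i, 0 <= surplus xs p i) /\
  (forall k, price p (a k) + surplus xs p (owner k) >= b k) /\
  (forall j, (usage xs j < c j)%N -> p j = 0).

Definition pme_witness (xs : {set 'I_K}) (p : 'I_J -> R) (i : 'I_I) : Prop :=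
  exists x : {set 'I_K}, feasible x /\
    (forall k, k \in x -> owner k != i) /\
    (forall k, k \in x -> price p (a k) <= b k) /\
    price p (usage x) = price p (usage xs).

Definition price_match (xs : {set 'I_K}) (p : 'I_J -> R) : Prop :=
  walrasian xs p /\ forall i, pme_witness xs p i.

End Auction.

(* Write [s i] for the surplus of bidder [i] at the Walrasian prices [p] and
   [P] for the revenue [p A x*].  Every bid satisfies [b k <= p a^k + s (i k)],
   every bidder wins at most one bid and only sold-out items carry a positive
   price, so any allocation of the bids of a coalition [C] has value at most
   [sum_(i in C) s i + P]: this is the core constraint of [C] for the WE
   payments.  If [C] omits [ibar], equality would force every bid of the
   allocation to be priced at most its amount and the allocation to have
   revenue [P], i.e. it would be a price-match witness for [ibar].  Hence the
   finitely many coalitions without [ibar] all have positive slack, and the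
   payment of [ibar] may be lowered by the least of these slacks. *)

From HB Require Import structures.
From mathcomp Require Import all_boot all_order all_algebra.
From mathcomp Require Import lra.
Import Order.TTheory GRing.Theory Num.Theory.

Set Implicit Arguments.
Unset Strict Implicit.
Unset Printing Implicit Defensive.

Local Open Scope ring_scope.

Lemma sum_if_eq (V : nmodType) (T : finType) (P : pred T) (t0 : T) (v : V) :
  \sum_(t | P t) (if t == t0 then v else 0) = if P t0 then v else 0.
Proof.
rewrite -big_mkcondr; case: ifP => Pt0.
- by rewrite (big_pred1 t0) // => t; apply/andP/eqP => [[_ /eqP] | ->].
- by rewrite big_pred0 // => t; apply/andP => -[Pt /eqP ett0]; rewrite -ett0 Pt in Pt0.
Qed.

Section Auction.
Variables (R : realFieldType) (J I K : nat).
Variables (c : 'I_J -> nat) (owner : 'I_K -> 'I_I) (a : 'I_K -> 'I_J -> nat) (b : 'I_K -> R).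

Implicit Types (x : {set 'I_K}) (C : {set 'I_I}) (p : 'I_J -> R).

Lemma feasible_with_set0 (c' : 'I_J -> nat) : feasible_with owner a c' set0.
Proof.
apply/andP; split; apply/forallP.
- by move=> j; rewrite big_set0.
- by move=> i; rewrite eq_card0 // => k; rewrite !inE.
Qed.

Lemma feasible_owner_inj (c' : 'I_J -> nat) x :
  feasible_with owner a c' x -> {in x &, injective owner}.
Proof.
case/andP=> _ /forallP one_bid k k' kx k'x eq_owner.
have /card_le1_eqP/(_ k' k) := one_bid (owner k).
by apply; rewrite inE ?kx ?k'x eq_owner eqxx.
Qed.

Lemma big_owner_feasible (V : nmodType) (c' : 'I_J -> nat) x k (F : 'I_K -> V) :
  feasible_with owner a c' x -> k \in x ->
  \sum_(k' in x | owner k' == owner k) F k' = F k.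
Proof.
move=> /feasible_owner_inj inj kx; rewrite (big_pred1 k) // => k'.
by apply/andP/eqP => [[k'x /eqP /inj] | ->]; [exact | rewrite kx].
Qed.

Lemma w_attained C (c' : 'I_J -> nat) :
  exists2 x, feasible_with owner a c' x && [forall k in x, owner k \in C] &
             w owner a b C c' = value b x.
Proof.
rewrite /w; apply: (big_ind (fun v => exists2 x, _ & v = value b x)).
- exists set0; last by rewrite /value big_set0.
  by rewrite feasible_with_set0; apply/forall_inP => k; rewrite inE.
- by move=> u v [x ? ->] [y ? ->]; case: leP => _; [exists y | exists x].
- by move=> x ?; exists x.
Qed.

Lemma price_usage p x : price p (usage a x) = \sum_(k in x) price p (a k).
Proof.
rewrite /price /usage exchange_big /=; apply: eq_bigr => j _.
by rewrite natr_sum mulr_sumr.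
Qed.

Lemma sum_price_acc_bundle p x :
  \sum_i price p (acc_bundle owner a x i) = price p (usage a x).
Proof.
rewrite /price exchange_big /=; apply: eq_bigr => j _.
by rewrite -mulr_sumr -natr_sum /usage (partition_big owner xpredT).
Qed.

Lemma price_acc_bundle_not_accepted p x i :
  ~~ has_accepted owner x i -> price p (acc_bundle owner a x i) = 0.
Proof.
move=> no_bid; rewrite /price big1 // => j _.
rewrite /acc_bundle big1 ?mulr0 // => k /andP[kx ki].
by case/exists_inP: no_bid; exists k.
Qed.

Lemma surplus_owner p (c' : 'I_J -> nat) x k :
  feasible_with owner a c' x -> k \in x ->
  surplus owner a b x p (owner k) = b k - price p (a k).
Proof.
move=> fx kx; rewrite /surplus /acc_amount (big_owner_feasible _ fx kx).
congr (_ - _); apply: eq_bigr => j _.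
by rewrite /acc_bundle (big_owner_feasible (V := nat) _ fx kx).
Qed.

Lemma price_usage_le p xs x :
  (forall j, 0 <= p j) -> (forall j, (usage a xs j < c j)%N -> p j = 0) ->
  feasible c owner a x -> price p (usage a x) <= price p (usage a xs).
Proof.
move=> p_ge0 p_unsold /andP[/forallP fx _]; apply: ler_sum => j _.
have [/p_unsold -> | sold] := ltnP (usage a xs j) (c j); first by rewrite !mul0r.
by rewrite ler_wpM2l // ler_nat (leq_trans (fx j)).
Qed.

Lemma sum_owner_le (f : 'I_I -> R) (c' : 'I_J -> nat) x C :
  (forall i, 0 <= f i) -> feasible_with owner a c' x ->
  (forall k, k \in x -> owner k \in C) ->
  \sum_(k in x) f (owner k) <= \sum_(i in C) f i.
Proof.
move=> f_ge0 fx xC; rewrite -(big_imset _ (feasible_owner_inj fx)) /=.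
rewrite [leRHS](bigID (mem (owner @: x))) /=.
have -> : \sum_(i in C | i \in owner @: x) f i = \sum_(i in owner @: x) f i.
  by apply: eq_bigl => i; apply/andb_idl => /imsetP[k kx ->]; exact: xC.
by rewrite lerDl sumr_ge0.
Qed.

Section Walrasian.
Variables (xs : {set 'I_K}) (p : 'I_J -> R).
Hypothesis hW : walrasian c owner a b xs p.

Let xs_feasible : feasible c owner a xs := proj1 (proj1 hW).
Let p_ge0 : forall j, 0 <= p j := proj1 (proj2 hW).
Let surplus_ge0 : forall i, 0 <= surplus owner a b xs p i :=
  proj1 (proj2 (proj2 hW)).
Let bid_le : forall k, b k <= price p (a k) + surplus owner a b xs p (owner k) :=
  proj1 (proj2 (proj2 (proj2 hW))).
Let p_unsold : forall j, (usage a xs j < c j)%N -> p j = 0 :=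
  proj2 (proj2 (proj2 (proj2 hW))).

Definition bid_slack k := price p (a k) + surplus owner a b xs p (owner k) - b k.

Lemma bid_slack_ge0 k : 0 <= bid_slack k.
Proof. by rewrite subr_ge0 bid_le. Qed.

Lemma sum_bid_slack_ge0 x : 0 <= \sum_(k in x) bid_slack k.
Proof. by apply: sumr_ge0 => k _; exact: bid_slack_ge0. Qed.

(* The core constraint of [C] at the Walrasian payments reads [0 <= core_slack C]. *)
Definition core_slack C :=
  \sum_(i in C) surplus owner a b xs p i + price p (usage a xs) - w owner a b C c.

Lemma value_decomp x :
  value b x = price p (usage a x) + \sum_(k in x) surplus owner a b xs p (owner k)
              - \sum_(k in x) bid_slack k.
Proof.
rewrite /value price_usage -big_split -sumrB /=; apply: eq_bigr => k _.
rewrite /bid_slack; lra.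
Qed.

Lemma value_le_coalition C x :
  feasible c owner a x -> (forall k, k \in x -> owner k \in C) ->
  value b x <= \sum_(i in C) surplus owner a b xs p i + price p (usage a xs).
Proof.
move=> fx xC; rewrite value_decomp.
have := sum_owner_le surplus_ge0 fx xC; have := price_usage_le p_ge0 p_unsold fx.
have := sum_bid_slack_ge0 x; lra.
Qed.

Lemma pme_witness_of_value_ge ibar C x :
  ibar \notin C -> feasible c owner a x -> (forall k, k \in x -> owner k \in C) ->
  \sum_(i in C) surplus owner a b xs p i + price p (usage a xs) <= value b x ->
  pme_witness c owner a b xs p ibar.
Proof.
move=> ibarC fx xC value_ge; rewrite value_decomp in value_ge.
have surplus_le := sum_owner_le surplus_ge0 fx xC.
have price_le := price_usage_le p_ge0 p_unsold fx.
have slack_ge0 := sum_bid_slack_ge0 x.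
have slack0 : \sum_(k in x) bid_slack k = 0 by lra.
exists x; split=> //; split; [|split].
- by move=> k /xC; apply: contraTneq => ->.
- move=> k kx; have := psumr_eq0P (fun k _ => bid_slack_ge0 k) slack0 kx.
  by have := surplus_ge0 (owner k); rewrite /bid_slack; lra.
- lra.
Qed.

Lemma core_slack_ge0 C : 0 <= core_slack C.
Proof.
have [x /andP[fx /forall_inP xC] wE] := w_attained C c.
by rewrite /core_slack wE subr_ge0 value_le_coalition.
Qed.

Lemma core_slack_gt0 ibar C :
  ~ pme_witness c owner a b xs p ibar -> ibar \notin C -> 0 < core_slack C.
Proof.
move=> no_pme ibarC; have [x /andP[fx /forall_inP xC] wE] := w_attained C c.
rewrite /core_slack wE subr_gt0 ltNge; apply/negP => value_ge.
exact/no_pme/(pme_witness_of_value_ge ibarC fx xC).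
Qed.

Lemma has_accepted_of_not_pme ibar :
  ~ pme_witness c owner a b xs p ibar -> has_accepted owner xs ibar.
Proof.
apply: contra_notT => no_bid.
exists xs; split=> //; split; [|split] => // k kx.
- by apply: contraNneq no_bid => <-; apply/exists_inP; exists k.
- by have := surplus_ge0 (owner k); rewrite (surplus_owner p xs_feasible kx) subr_ge0.
Qed.

Lemma core_selecting_discount (d rho : 'I_I -> R) :
  (forall i, rho i = price p (acc_bundle owner a xs i) - d i) ->
  (forall i, 0 <= d i) -> (forall i, ~~ has_accepted owner xs i -> d i = 0) ->
  (forall C, \sum_(i | i \notin C) d i <= core_slack C) ->
  core_selecting c owner a b xs rho.
Proof.
move=> rhoE d_ge0 d_unaccepted d_le; split; [|split].
- move=> i no_bid.
  by rewrite rhoE d_unaccepted // price_acc_bundle_not_accepted // subr0.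
- move=> i; rewrite rhoE; have := surplus_ge0 i; have := d_ge0 i.
  rewrite /surplus; lra.
- move=> C.
  have paidE i : acc_amount owner b xs i - rho i = surplus owner a b xs p i + d i.
    by rewrite rhoE /surplus; lra.
  rewrite (eq_bigr _ (fun i _ => paidE i)) big_split /=.
  rewrite (eq_bigr _ (fun i _ => rhoE i)) [\sum_i (_ - _)]sumrB sum_price_acc_bundle.
  rewrite [\sum_i d i](bigID (mem C)) /=.
  by have := d_le C; rewrite /core_slack; lra.
Qed.

End Walrasian.
End Auction.

Theorem theorem2 (R : realFieldType) (J I K : nat)
  (c : 'I_J -> nat) (owner : 'I_K -> 'I_I) (a : 'I_K -> 'I_J -> nat) (b : 'I_K -> R)
  (hc : forall j, (1 <= c j)%N)
  (ha : forall k j, (a k j <= c j)%N)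
  (hb : forall k, 0 <= b k)
  (xs : {set 'I_K}) (p : 'I_J -> R) (ibar : 'I_I) :
  walrasian c owner a b xs p ->
  ~ pme_witness c owner a b xs p ibar ->
  exists eps : R, 0 < eps /\
    (let rho := fun i : 'I_I =>
        if i == ibar then price p (acc_bundle owner a xs i) - eps
        else price p (acc_bundle owner a xs i) in
     core_selecting c owner a b xs rho /\
     \sum_i rho i < \sum_i price p (acc_bundle owner a xs i)).
Proof.
move=> W no_pme.
pose eps :=
  \big[Num.min/1]_(C : {set 'I_I} | ibar \notin C) core_slack c owner a b xs p C.
have eps_gt0 : 0 < eps.
  by apply: lt_bigmin => // C; exact: (core_slack_gt0 W no_pme).
exists eps; split=> // rho.
pose d i : R := if i == ibar then eps else 0.
have rhoE i : rho i = price p (acc_bundle owner a xs i) - d i.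
  by rewrite /rho /d; case: eqP; rewrite ?subr0.
split.
- apply: (core_selecting_discount W rhoE) => [i|i|C]; rewrite /d.
  + by case: eqP => // _; exact: ltW.
  + by case: eqP => // -> /negP; rewrite (has_accepted_of_not_pme W no_pme).
  + rewrite sum_if_eq; case: ifP => [ibarC|_]; last exact: core_slack_ge0.
    exact: bigmin_le_cond.
- by rewrite (eq_bigr _ (fun i _ => rhoE i)) sumrB sum_if_eq ltrBlDr ltrDl.
Qed.
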